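(* Let $K$ be an algebraically closed field of characteristic zero, $\mathcal{K}=K(t)$, $\phi_2(z) := \frac{(t+1)(z-1)}{z+t}$, and let $\alpha \in \mathcal{K}$ satisfy condition $( * )$. Then (A) $\phi_2(\alpha)$ also satisfies $( * )$, and (B) $h(\phi_2(\alpha)) = h(\alpha)+1$.
   Context: Condition $( * )$ on $\beta\in\mathcal{K}$: (i) $\beta$ vanishes at $\mathfrak{p}_{-1}$; (ii) $\beta^2-\beta+t+1$ vanishes at $\mathfrak{p}_{-1}$, and possibly at $\mathfrak{p}_{-3/4}$, but at no other place of $\mathcal{K}$; (iii) if $\beta^2-\beta+t+1$ vanishes at $\mathfrak{p}_{-3/4}$, then $\beta - 1/2$ also vanishes at $\mathfrak{p}_{-3/4}$. Here places of $\mathcal{K}$ are those trivial on $K$, $\mathfrak{p}_c$ is the place at $t=c$, and vanishing means positive valuation. The height $h$ of an element of $K(t)$ is its degree as a rational function in $t$. *)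

From HB Require Import structures.
From mathcomp Require Import all_boot all_order all_algebra all_field.
Set Implicit Arguments. Unset Strict Implicit. Unset Printing Implicit Defensive.
Import Order.TTheory GRing.Theory Num.Theory.
Local Open Scope ring_scope.

Notation ratf K := {fraction {poly K}}.
Definition tvar (K : fieldType) : ratf K := tofrac 'X.
Definition cst (K : fieldType) (c : K) : ratf K := tofrac c%:P.

(* Places of K(t) trivial on K: [Some c] is p_c (t = c), [None] the place at
   infinity.  (K algebraically closed, so these are all the places.) *)
Definition place (K : fieldType) := option K.

(* x vanishes (has positive valuation) at the place P.  Written with any
   representation x = p/q (q <> 0): v_c(x) = mult_c p - mult_c q,
   v_oo(x) = deg q - deg p; this is independent of the representation. *)
Definition vanishes (K : fieldType) (P : place K) (x : ratf K) : Prop :=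
  exists p q : {poly K}, [/\ q != 0, x = tofrac p / tofrac q &
    (p == 0) || match P with
                | Some c => (mup c q < mup c p)%N
                | None => (size p < size q)%N
                end].

Definition cond_star (K : fieldType) (b : ratf K) : Prop :=
  let pm1 : place K := Some (-1) in
  let pm34 : place K := Some (- (3%:R / 4%:R)) in
  let g := b ^+ 2 - b + tvar K + 1 in
  [/\ vanishes pm1 b,
      vanishes pm1 g,
      (forall P : place K, vanishes P g -> P = pm1 \/ P = pm34) &
      (vanishes pm34 g -> vanishes pm34 (b - cst (2%:R^-1)))].

Definition height_is (K : fieldType) (x : ratf K) (n : nat) : Prop :=
  exists p q : {poly K}, [/\ q != 0, coprimep p q, x = tofrac p / tofrac q &
    n = maxn (size p).-1 (size q).-1].

Definition phi2 (K : fieldType) (z : ratf K) : ratf K :=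
  (tvar K + 1) * (z - 1) / (z + tvar K).

(* Write alpha = p/q in lowest terms.  Then g(alpha) := alpha^2 - alpha + t + 1
   is G/q^2 with G = p^2 - pq + (t+1)q^2 coprime to q, so condition (star) is a
   statement about the roots of p and G and about deg G >= 2 deg q.  As p(-1) = 0,
   phi2(alpha) = (t+1)(p-q)/(p+tq) is again in lowest terms, and G transforms
   into (t+1)^2 G: the only new root is -1, and at -3/4 the relation p = q/2
   makes the new numerator of phi2(alpha) - 1/2 vanish.  Passing from (p, q)
   to ((t+1)(p-q), p+tq) raises max(deg p, deg q) by exactly one. *)

From mathcomp Require Import all_boot all_algebra all_field.
From mathcomp Require Import zify ring.
Import GRing.Theory.
Set Implicit Arguments. Unset Strict Implicit. Unset Printing Implicit Defensive.
Local Open Scope ring_scope.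

Section RationalFunctions.
Variable K : fieldType.
Implicit Types (p q : {poly K}) (c : K).
Local Notation tf := (@tofrac {poly K}).

Lemma frac_repr (x : ratf K) : exists n d, d != 0 /\ x = tf n / tf d.
Proof.
elim/quotW: x => x; exists \n_x, \d_x; split; first exact: denom_ratioP.
have d_neq0 : tf \d_x != 0 by rewrite tofrac_eq0 denom_ratioP.
apply: (mulIf d_neq0); rewrite divfK //.
unlock tofrac; rewrite !piE; apply/eqmodP; rewrite /= equivfE.
rewrite /FracField.mulf /= !numden_Ratio ?mulf_neq0 ?denom_ratioP ?oner_eq0 //.
by rewrite !mulr1 mulrC.
Qed.

Lemma frac_coprime_repr (x : ratf K) :
  exists p q, [/\ q != 0, coprimep p q & x = tf p / tf q].
Proof.
have [n [d [d_neq0 ->]]] := frac_repr x.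
set g := gcdp n d; have g_neq0 : g != 0 by rewrite gcdp_eq0 negb_and d_neq0 orbT.
have dK : d %/ g * g = d by rewrite divpK // dvdp_gcdr.
have nK : n %/ g * g = n by rewrite divpK // dvdp_gcdl.
exists (n %/ g), (d %/ g); split.
- by apply: contraNneq d_neq0 => d0; rewrite -dK d0 mul0r.
- by rewrite coprimep_div_gcd // d_neq0 orbT.
rewrite -{1}nK -{1}dK !tofracM invfM mulrACA divff ?mulr1 //.
by rewrite tofrac_eq0.
Qed.

Lemma vanishes_frac (P : place K) p q : q != 0 ->
  vanishes P (tf p / tf q) <->
  (p == 0) || match P with
              | Some c => (mup c q < mup c p)%N
              | None => (size p < size q)%N
              end.
Proof.
move=> q_neq0; split; last by exists p, q.
case=> p' [q'] [q'_neq0 /eqP]; rewrite eqr_div ?tofrac_eq0 // -!tofracM tofrac_eq.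
move=> /eqP cross; apply: contraLR; rewrite !negb_or => /andP[p_neq0 p_big].
have p'_neq0 : p' != 0.
  apply: contraNneq p_neq0 => p'0; move/eqP: cross.
  by rewrite p'0 mul0r mulf_eq0 (negbTE q'_neq0) orbF.
rewrite p'_neq0 /=; move: p_big; case: P => [c|].
  by have := congr1 (mup c) cross; rewrite !mupM //; lia.
have := congr1 (fun r : {poly K} => size r) cross; rewrite !size_mul //.
rewrite /=; move: p_neq0 p'_neq0 q_neq0 q'_neq0; rewrite -!size_poly_gt0.
by move: (size p) (size q) (size p') (size q') => a b a' b'; lia.
Qed.

Lemma vanishes_frac_coprime c p q : q != 0 -> coprimep p q ->
  vanishes (Some c) (tf p / tf q) <-> root p c.
Proof.
move=> q_neq0 pq; rewrite vanishes_frac //.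
have [->|p_neq0] := eqVneq p 0; first by rewrite root0.
have [pc|npc] := boolP (root p c).
  by rewrite (mupNroot (coprimep_root pq pc)) -XsubC_dvd // dvdp_XsubCl.
by rewrite (mupNroot npc).
Qed.

Definition g_num p q := p ^+ 2 - p * q + ('X + 1) * q ^+ 2.
Definition phi2_num p q := ('X + 1) * (p - q).
Definition phi2_den p q := p + 'X * q.

Lemma g_frac p q : q != 0 ->
  (tf p / tf q) ^+ 2 - tf p / tf q + tvar K + 1 = tf (g_num p q) / tf (q ^+ 2).
Proof.
have frac_id (L : fieldType) (a b x : L) : b != 0 ->
    (a / b) ^+ 2 - a / b + x + 1 = (a ^+ 2 - a * b + (x + 1) * b ^+ 2) / b ^+ 2.
  by move=> b_neq0; field.
rewrite -tofrac_eq0 => /frac_id ->.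
by rewrite /g_num /tvar !(tofracD, tofracN, tofracM, tofracXn, tofrac1).
Qed.

Lemma phi2_frac p q : q != 0 -> phi2_den p q != 0 ->
  phi2 (tf p / tf q) = tf (phi2_num p q) / tf (phi2_den p q).
Proof.
have frac_id (L : fieldType) (a b x : L) : b != 0 -> a + x * b != 0 ->
    (x + 1) * (a / b - 1) / (a / b + x) = (x + 1) * (a - b) / (a + x * b).
  move=> b_neq0 den_neq0; have -> : a / b + x = (a + x * b) / b by field.
  by field; rewrite b_neq0 den_neq0.
rewrite /phi2 /phi2_num /phi2_den /tvar -tofrac_eq0 => q_neq0.
rewrite -tofrac_eq0 tofracD tofracM => /(frac_id _ _ _ _ q_neq0) ->.
by rewrite !(tofracD, tofracN, tofracM, tofrac1).
Qed.

Lemma sub_cst_frac p q (h : K) : q != 0 ->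
  tf p / tf q - cst h = tf (p - h%:P * q) / tf q.
Proof.
have frac_id (L : fieldType) (a b c : L) : b != 0 -> a / b - c = (a - c * b) / b.
  by move=> b_neq0; field.
by rewrite -tofrac_eq0 /cst => /frac_id ->; rewrite tofracB tofracM.
Qed.

Lemma gnum_phi2 p q : g_num (phi2_num p q) (phi2_den p q) = ('X + 1) ^+ 2 * g_num p q.
Proof.
have ring_id (R : comNzRingType) (a b x : R) :
    ((x + 1) * (a - b)) ^+ 2 - (x + 1) * (a - b) * (a + x * b)
      + (x + 1) * (a + x * b) ^+ 2 =
    (x + 1) ^+ 2 * (a ^+ 2 - a * b + (x + 1) * b ^+ 2) by ring.
exact: ring_id.
Qed.

Lemma coprimep_gnum p q : coprimep p q -> coprimep (g_num p q) (q ^+ 2).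
Proof.
move=> pq; apply: coprimep_expr; rewrite coprimep_sym.
have -> : g_num p q = (('X + 1) * q - p) * q + p ^+ 2.
  have ring_id (R : comNzRingType) (a b x : R) :
    a ^+ 2 - a * b + (x + 1) * b ^+ 2 = ((x + 1) * b - a) * b + a ^+ 2 by ring.
  exact: ring_id.
by rewrite coprimep_addl_mul coprimep_expr // coprimep_sym.
Qed.

Lemma coprimep_subCM p q (h : K) : coprimep p q -> coprimep (p - h%:P * q) q.
Proof.
rewrite coprimep_sym => pq; rewrite coprimep_sym addrC -mulNr.
by rewrite coprimep_addl_mul.
Qed.

Lemma phi2_coprime_frac p q : q != 0 -> coprimep p q -> root p (-1) ->
  [/\ phi2_den p q != 0, coprimep (phi2_num p q) (phi2_den p q)
     & phi2 (tf p / tf q) = tf (phi2_num p q) / tf (phi2_den p q)].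
Proof.
move=> q_neq0 pq p1; have q1 := coprimep_root pq p1; move/eqP: p1 => p1.
have den1 : (phi2_den p q).[-1] != 0.
  by rewrite /phi2_den !hornerE p1 add0r mulN1r oppr_eq0.
have den_neq0 : phi2_den p q != 0 by apply: contraNneq den1 => ->; rewrite horner0.
split=> //; last exact: phi2_frac.
have X1 : 'X + 1 = 'X - (-1)%:P :> {poly K} by rewrite polyCN polyC1 opprK.
have pq1 : (p - q).[-1] != 0 by rewrite !hornerE p1 add0r oppr_eq0.
rewrite /phi2_num coprimepMl; apply/andP; split.
  by rewrite X1 coprimep_sym coprimep_XsubC rootE.
have -> : phi2_den p q = 1 * (p - q) + ('X + 1) * q.
  by rewrite /phi2_den mul1r mulrDl mul1r addrCA subrK addrC.
rewrite coprimep_addl_mul coprimepMr X1 coprimep_XsubC rootE pq1 /=.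
by rewrite coprimep_sym addrC -mulN1r coprimep_addl_mul coprimep_sym.
Qed.

Lemma size_Xadd1 : size ('X + 1 : {poly K}) = 2.
Proof. by rewrite -polyC1 size_XaddC. Qed.

Lemma size_phi2_den_le p q : (size (phi2_den p q) <= maxn (size p) (size q).+1)%N.
Proof.
apply: leq_trans (size_polyD _ _) _; rewrite geq_max leq_maxl /=.
by apply: leq_trans (size_polyMleq _ _) _; rewrite size_polyX add2n leq_maxr.
Qed.

Lemma size_gnum_lead p q : ((size q).+1 < size p)%N ->
  size (g_num p q) = (size p + size p).-1.
Proof.
move=> q_small; have p_neq0 : p != 0 by rewrite -size_poly_gt0 (ltn_trans _ q_small).
rewrite /g_num -addrA size_polyDl; first by rewrite expr2 size_mul.
rewrite expr2 size_mul //; apply: leq_ltn_trans (size_polyD _ _) _.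
rewrite size_polyN gtn_max.
have := size_polyMleq p q; have := size_polyMleq ('X + 1) (q ^+ 2).
rewrite size_Xadd1 expr2; have := size_polyMleq q q; move: q_small.
move: (size p) (size q) (size (q * q)) (size (p * q)) (size (('X + 1) * (q * q))).
by move=> *; apply/andP; split; lia.
Qed.

Lemma size_phi2_gnum p q : q != 0 -> (size (q ^+ 2)%R <= size (g_num p q))%N ->
  (size (phi2_den p q ^+ 2)%R <= size (('X + 1) ^+ 2 * g_num p q)%R)%N.
Proof.
move=> q_neq0 q_le_g.
have X1_neq0 : ('X + 1 : {poly K}) != 0 by rewrite -size_poly_gt0 size_Xadd1.
have g_neq0 : g_num p q != 0.
  by rewrite -size_poly_gt0 (leq_trans _ q_le_g) // size_poly_gt0 expf_neq0.
have sX12 : size (('X + 1) ^+ 2 : {poly K}) = 3.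
  by rewrite expr2 size_mul // size_Xadd1.
rewrite [X in (_ <= X)%N]size_mul ?expf_neq0 // sX12 expr2.
apply: leq_trans (size_polyMleq _ _) _; have := size_phi2_den_le p q.
move: q_le_g; rewrite expr2 size_mul //.
have [q_small|] := ltnP (size q).+1 (size p).
  rewrite size_gnum_lead //; move: q_small.
  by move: (size p) (size q) (size (phi2_den p q)) => *; lia.
by move: (size p) (size q) (size (phi2_den p q)) (size (g_num p q)) => *; lia.
Qed.

Lemma maxn_size_phi2 p q : q != 0 ->
  maxn (size (phi2_num p q)).-1 (size (phi2_den p q)).-1 =
  (maxn (size p).-1 (size q).-1).+1.
Proof.
move=> q_neq0; have q_pos : (0 < size q)%N by rewrite size_poly_gt0.
have sXq : size ('X * q) = (size q).+1 by rewrite mulrC size_mulX.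
have [p_le|q_lt] := leqP (size p) (size q).
  have -> : size (phi2_den p q) = (size q).+1.
    by rewrite /phi2_den addrC size_polyDl sXq // ltnS.
  have := size_polyMleq ('X + 1) (p - q); have := size_polyD p (- q).
  rewrite size_Xadd1 size_polyN; move: p_le q_pos.
  by move: (size p) (size q) (size (p - q)) (size (phi2_num p q)) => *; lia.
have spq : size (p - q) = size p by rewrite size_polyDl // size_polyN.
have -> : size (phi2_num p q) = (size p).+1.
  rewrite size_mul ?size_Xadd1 ?spq //; first by rewrite -size_poly_gt0 size_Xadd1.
  by rewrite -size_poly_gt0 spq (leq_ltn_trans _ q_lt).
have := size_phi2_den_le p q; move: q_lt q_pos.
by move: (size p) (size q) (size (phi2_den p q)) => *; lia.
Qed.

End RationalFunctions.

Section StarCondition.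
Variable K : fieldType.
Hypothesis charK0 : [pchar K] =i pred0.
Implicit Types p q : {poly K}.
Local Notation tf := (@tofrac {poly K}).
Local Notation c34 := (- (3%:R / 4%:R) : K).
Local Notation half := (2%:R^-1 : K).

(* The size condition says that [g] does not vanish at the place at infinity. *)
Definition cond_star_poly p q : Prop :=
  [/\ root p (-1), root (g_num p q) (-1),
      forall c, root (g_num p q) c -> c = -1 \/ c = c34,
      (size (q ^+ 2)%R <= size (g_num p q))%N &
      root (g_num p q) c34 -> root (p - half%:P * q) c34].

Lemma cond_star_frac p q : q != 0 -> coprimep p q ->
  cond_star (tf p / tf q) <-> cond_star_poly p q.
Proof.
move=> q_neq0 pq; have q2_neq0 : q ^+ 2 != 0 by rewrite expf_neq0.
have van_g c := vanishes_frac_coprime c q2_neq0 (coprimep_gnum pq).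
have van_p c := vanishes_frac_coprime c q_neq0 pq.
have van_half := vanishes_frac_coprime c34 q_neq0 (coprimep_subCM half pq).
have van_oo : vanishes None (tf (g_num p q) / tf (q ^+ 2)) <->
    (size (g_num p q) < size (q ^+ 2)%R)%N.
  rewrite vanishes_frac //; have [->|//] := eqVneq (g_num p q) 0.
  by rewrite size_poly0 size_poly_gt0.
rewrite /cond_star g_frac // sub_cst_frac //.
split=> [[v1 vg1 vroots vhalf] | [r1 rg1 rroots rsize rhalf]]; split.
- exact/van_p.
- exact/van_g.
- by move=> c /van_g/vroots [] [->]; [left | right].
- by rewrite leqNgt; apply/negP => /van_oo/vroots [].
- by move=> /van_g/vhalf/van_half.
- exact/van_p.
- exact/van_g.
- by case=> [c /van_g/rroots [] -> | /van_oo]; [left | right | rewrite ltnNge rsize].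
- by move=> /van_g/rhalf/van_half.
Qed.

Lemma cond_star_poly_phi2 p q : q != 0 -> cond_star_poly p q ->
  cond_star_poly (phi2_num p q) (phi2_den p q).
Proof.
move=> q_neq0 [_ _ g_roots g_size g_half]; rewrite /cond_star_poly gnum_phi2.
have rootX1 c : root ('X + 1) c = (c == -1) by rewrite -polyC1 root_XaddC.
have root_g c : root (('X + 1) ^+ 2 * g_num p q) c = (c == -1) || root (g_num p q) c.
  by rewrite rootM root_exp ?rootX1 //; apply: mulrC.
have nat_neq0 n : n.+1%:R != 0 :> K by move/GRing.pcharf0P: charK0 => ->.
have c34_neq : c34 != -1.
  have -> : c34 = 4%:R^-1 - 1 by field; rewrite nat_neq0.
  by rewrite -subr_eq0 opprK subrK invr_eq0 nat_neq0.
split.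
- by rewrite /phi2_num rootM rootX1 eqxx.
- by rewrite root_g eqxx.
- by move=> c; rewrite root_g => /orP[/eqP ->|/g_roots]; [left |].
- exact: size_phi2_gnum.
rewrite root_g (negbTE c34_neq) /= => /g_half.
rewrite /phi2_num /phi2_den !rootE !hornerE subr_eq0 => /eqP ->.
by apply/eqP; field; rewrite ?nat_neq0.
Qed.

End StarCondition.

Theorem lemma5p14 (K : closedFieldType) (charK0 : [pchar K] =i pred0)
  (alpha : {fraction {poly K}}) :
  cond_star alpha ->
  cond_star (phi2 alpha) /\
  (forall n : nat, height_is alpha n -> height_is (phi2 alpha) n.+1).
Proof.
move=> star; split.
  have [p [q [q_neq0 pq alphaE]]] := frac_coprime_repr alpha.
  move: star; rewrite alphaE => /(cond_star_frac q_neq0 pq) star.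
  have [p1 _ _ _ _] := star.
  have [den_neq0 phi2_pq ->] := phi2_coprime_frac q_neq0 pq p1.
  by apply/(cond_star_frac den_neq0 phi2_pq); apply: cond_star_poly_phi2.
move=> _ [p [q [q_neq0 pq alphaE ->]]].
move: star; rewrite alphaE => /(cond_star_frac q_neq0 pq) [p1 _ _ _ _].
have [den_neq0 phi2_pq ->] := phi2_coprime_frac q_neq0 pq p1.
by exists (phi2_num p q), (phi2_den p q); split=> //; rewrite maxn_size_phi2.
Qed.
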